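(* Let $\mathbf L$ be an algebraic lattice with an equa-interior operator $\eta$. If $x,z_1,\dots,z_k,a_1,\dots,a_k$ are coatoms of $\mathbf L$ such that $x\wedge z_i\le a_i$ properly for each $i=1,\dots,k$, then $\eta(x)\vee\bigwedge_{i=1}^k z_i=1$.
   Context: An equa-interior operator on an algebraic lattice $\mathbf L$ is a map $\eta:L\to L$ such that for all $x,y,z\in L$: (I1) $\eta(x)\le x$; (I2) $x\ge y$ implies $\eta(x)\ge\eta(y)$; (I3) $\eta^2(x)=\eta(x)$; (I4) $\eta(1)=1$; (I5) if $\eta(x)=u$ for all $x\in X\subseteq L$ then $\eta(\bigvee X)=u$; (I6) $\eta(x)\vee(y\wedge z)=(\eta(x)\vee y)\wedge(\eta(x)\vee z)$; (I7) the image $\eta(L)$ is the complete join subsemilattice of $L$ generated by the elements of $\eta(L)$ that are compact in $\mathbf L$; (I8) there is a compact element $w\in L$ with $\eta(w)=w$ such that the interval $[w,1]$ is isomorphic to the congruence lattice of a join semilattice with $0$. For coatoms, ''$x\wedge z\le a$ properly'' means $x\wedge z\le a$ while $x\not\le a$ and $z\not\le a$. *)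

From HB Require Import structures.
From mathcomp Require Import all_boot all_order.
Set Implicit Arguments. Unset Strict Implicit. Unset Printing Implicit Defensive.
Import Order.TTheory.
Local Open Scope order_scope.

Section Defs.
Context {d : Order.disp_t} {T : tbLatticeType d}.

Definition is_sup (X : T -> Prop) (s : T) : Prop :=
  (forall x, X x -> x <= s) /\ (forall u, (forall x, X x -> x <= u) -> s <= u).

Definition complete_lattice : Prop := forall X : T -> Prop, exists s, is_sup X s.

Definition compact (c : T) : Prop :=
  forall (X : T -> Prop) (s : T), is_sup X s -> c <= s ->
    exists F : seq T, (forall x, x \in F -> X x) /\ c <= \join_(x <- F) x.

Definition algebraic_lattice : Prop :=
  complete_lattice /\ forall x : T, is_sup (fun c => compact c /\ c <= x) x.

Definition coatom (a : T) : Prop :=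
  a < \top /\ forall y, a <= y -> y = a \/ y = \top.

Definition meet_le_properly (x z a : T) : Prop :=
  x `&` z <= a /\ ~ (x <= a) /\ ~ (z <= a).
End Defs.

Definition join_semilattice0 (S : Type) (j : S -> S -> S) (z : S) : Prop :=
  (forall a b c, j a (j b c) = j (j a b) c) /\ (forall a b, j a b = j b a) /\
  (forall a, j a a = a) /\ (forall a, j z a = a).

Definition congruence (S : Type) (j : S -> S -> S) (R : S -> S -> Prop) : Prop :=
  (forall a, R a a) /\ (forall a b, R a b -> R b a) /\
  (forall a b c, R a b -> R b c -> R a c) /\
  (forall a b c, R a b -> R (j a c) (j b c)).

(* The interval [w, 1] of T is (order-, hence lattice-) isomorphic to the
   congruence lattice Con(S, j) ordered by inclusion. *)
Definition interval_iso_Con {d : Order.disp_t} {T : tbLatticeType d} (w : T)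
  (S : Type) (j : S -> S -> S) : Prop :=
  exists f : T -> (S -> S -> Prop),
    (forall x, w <= x -> congruence j (f x)) /\
    (forall x y, w <= x -> w <= y ->
       (x <= y <-> (forall a b, f x a b -> f y a b))) /\
    (forall R, congruence j R -> exists x, w <= x /\ (forall a b, f x a b <-> R a b)).

Definition equa_interior {d : Order.disp_t} {T : tbLatticeType d} (eta : T -> T) : Prop :=
  (forall x, eta x <= x) /\
  (forall x y, y <= x -> eta y <= eta x) /\
  (forall x, eta (eta x) = eta x) /\
  eta \top = \top /\
  (* I5 *) (forall (X : T -> Prop) (u s : T), (exists x, X x) ->
              (forall x, X x -> eta x = u) -> is_sup X s -> eta s = u) /\
  (* I6 *) (forall x y z, eta x `|` (y `&` z) = (eta x `|` y) `&` (eta x `|` z)) /\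
  (forall y, (exists x, y = eta x) <->
              exists Y : T -> Prop,
                (forall c, Y c -> compact c /\ exists x, c = eta x) /\ is_sup Y y) /\
  (exists w : T, compact w /\ eta w = w /\
              exists (S : Type) (j : S -> S -> S) (z : S),
                join_semilattice0 j z /\ interval_iso_Con w j).

From HB Require Import structures.
From mathcomp Require Import all_boot all_order.
Import Order.TTheory.
Local Open Scope order_scope.

(* Fix i and suppose eta(x) v z_i < 1; as z_i is a coatom, eta(x) <= x /\ z_i <= a_i.
   If eta(a_i) were not below x, then eta(a_i) v x = 1 and distributivity (I6) gives
   eta(a_i) v (x /\ z_i) = eta(a_i) v z_i, which is below a_i: impossible since
   z_i is not.  So eta(a_i) <= x, and monotonicity and idempotence force
   eta(a_i) = eta(x).  But then (I5) applied to {x, a_i} yields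
   eta(x) = eta(x v a_i) = eta(1) = 1, contradicting eta(x) <= x < 1.
   Hence eta(x) v z_i = 1 for every i, and (I6) carries this over to the meet. *)

Section Coatoms.
Context {d : Order.disp_t} {T : tbLatticeType d}.

Lemma coatom_joinr {c t : T} : coatom c -> ~ t <= c -> t `|` c = \top.
Proof.
move=> [_ c_max] t_c; case: (c_max (t `|` c) (leUr _ _)) => // tc_c.
by case: t_c; rewrite -tc_c leUl.
Qed.

Lemma coatoms_join_top {x a : T} :
  coatom x -> coatom a -> ~ x <= a -> x `|` a = \top.
Proof.
move=> x_coatom [_ a_max] x_a; rewrite joinC; apply: coatom_joinr => // a_x.
case: (a_max x a_x) => [x_eq_a | x_eq1].
- by apply: x_a; rewrite x_eq_a.
- by case: x_coatom; rewrite x_eq1 ltxx.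
Qed.

End Coatoms.

Section EquaInterior.
Context {d : Order.disp_t} {T : tbLatticeType d} {eta : T -> T}.
Hypothesis interior_le : forall x, eta x <= x.
Hypothesis interior_mono : forall x y, y <= x -> eta y <= eta x.
Hypothesis interior_idem : forall x, eta (eta x) = eta x.
Hypothesis interior_top : eta \top = \top.
Hypothesis interior_sup : forall (X : T -> Prop) (u s : T), (exists x, X x) ->
  (forall x, X x -> eta x = u) -> is_sup X s -> eta s = u.
Hypothesis interior_joinIr :
  forall x y z, eta x `|` (y `&` z) = (eta x `|` y) `&` (eta x `|` z).

Lemma interior_le_eq {x y : T} : eta x <= y -> eta y <= x -> eta x = eta y.
Proof.
move=> ex_y ey_x; apply/eqP; rewrite eq_le.
have /interior_mono := ex_y; have /interior_mono := ey_x.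
by rewrite !interior_idem => -> ->.
Qed.

Lemma interior_join2 {x y : T} : eta x = eta y -> eta (x `|` y) = eta x.
Proof.
move=> exy; apply: (@interior_sup (fun t => t = x \/ t = y)).
- by exists x; left.
- by move=> t [->|->].
- split; first by move=> t [->|->]; rewrite ?leUl ?leUr.
  by move=> u u_ub; rewrite leUx (u_ub x (or_introl erefl)) (u_ub y (or_intror erefl)).
Qed.

Lemma interior_neq_join_top {x y : T} :
  x < \top -> x `|` y = \top -> eta x <> eta y.
Proof.
move=> x_lt1 xy1 exy; move: (le_lt_trans (interior_le x) x_lt1).
by rewrite -(interior_join2 exy) xy1 interior_top ltxx.
Qed.

Lemma interior_le_of_meet_le {x z a : T} :
  coatom x -> x `&` z <= a -> ~ z <= a -> eta a <= x.
Proof.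
move=> x_coatom xz_a z_a; apply/idPn => /negP ea_x.
have ea_x1 := coatom_joinr x_coatom ea_x.
have : eta a `|` (x `&` z) <= a by rewrite leUx interior_le xz_a.
rewrite interior_joinIr ea_x1 meet1x => eaz_a.
by apply: z_a; apply: le_trans eaz_a; rewrite leUr.
Qed.

Lemma interior_join_coatom_meet_le {x z a : T} :
  coatom x -> coatom z -> coatom a -> meet_le_properly x z a ->
  eta x `|` z = \top.
Proof.
move=> x_coatom z_coatom a_coatom [xz_a [x_a z_a]].
apply: coatom_joinr => // ex_z.
have ex_a : eta x <= a by apply: le_trans _ xz_a; rewrite lexI interior_le ex_z.
have ea_x := interior_le_of_meet_le x_coatom xz_a z_a.
have x_lt1 : x < \top by case: x_coatom.
exact: interior_neq_join_top x_lt1 (coatoms_join_top x_coatom a_coatom x_a)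
  (interior_le_eq ex_a ea_x).
Qed.

Lemma interior_join_bigI_top {x : T} {k : nat} {z : 'I_k -> T} :
  (forall i, eta x `|` z i = \top) -> eta x `|` \meet_(i < k) z i = \top.
Proof.
move=> exz1; apply: (big_ind (fun y => eta x `|` y = \top)) => //.
- exact: joinx1.
- by move=> y1 y2 ey1 ey2; rewrite interior_joinIr ey1 ey2 meetx1.
Qed.

End EquaInterior.

Theorem theorem7p3 (d : Order.disp_t) (T : tbLatticeType d) (eta : T -> T)
  (k : nat) (x : T) (z a : 'I_k -> T) :
  algebraic_lattice (T := T) -> equa_interior eta ->
  coatom x -> (forall i, coatom (z i)) -> (forall i, coatom (a i)) ->
  (forall i, meet_le_properly x (z i) (a i)) ->
  eta x `|` \meet_(i < k) z i = \top.
Proof.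
move=> _ [I1 [I2 [I3 [I4 [I5 [I6 _]]]]]] x_coatom z_coatom a_coatom xza.
apply: (interior_join_bigI_top I6) => i.
exact: (interior_join_coatom_meet_le I1 I2 I3 I4 I5 I6
  x_coatom (z_coatom i) (a_coatom i) (xza i)).
Qed.
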